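(* Let $(N,M,W,C,P,\overline{Q})$ be an MRS-situation and $(N,M,v)$ its MRS-game. Then: (i) $v(R,S)>0$ for all coalitions $\emptyset\ne R\subseteq N$ and $S\subseteq M$; (ii) $v(R,S)+v(F,T)\le v(R\cup F,S\cup T)$ for all $R,F\subseteq N$ and $S,T\subseteq M$ with $R\cap F=\emptyset$ and $S\cap T=\emptyset$; (iii) $v(R,S)\le v(F,T)$ for all $R\subseteq F\subseteq N$ and $S\subseteq T\subseteq M$.
   Context: An MRS-situation $(N,M,W,C,P,\overline{Q})$ consists of a finite set $N$ of retailers and a finite set $M$ of suppliers (distinct agents), and: for each $j\in M$ a unit production cost $c_j:[0,\infty)\to(0,\infty)$, decreasing and continuous with $c_j(q)q$ nondecreasing, and a wholesale price $w_j:[0,\infty)\to(0,\infty)$, nonincreasing and continuous, with $w_j(q)>c_j(q)$ for all $q\ge0$ and $w_j(q)q$ nondecreasing; for each $i\in N$ a selling price $p_i:[0,\infty)\to\mathbb{R}$, nonincreasing and continuous, with $p_i(0)>w_j(0)$ for all $j$, and $q_i^*>0$ with $p_i(q_i^* )=0$; and capacities $\overline{q}_{ij}\in(0,\infty)$. For an order matrix $q=(q_{ij})_{i\in R,j\in M}\ge0$: $q_{Rj}=\sum_{i\in R}q_{ij}$, $q_{iM}=\sum_{j}q_{ij}$, $q_{RS}=\sum_{j\in S}\sum_{i\in R}q_{ij}$, $q_i=(q_{ij})_j$, $q_R=(q_{Rj})_j$; $c_S(x)=\min_{j\in S}c_j(x)$. For $i\in R$: $\Pi_i(q_i,\Psi^S(q_R))=p_i(q_{iM})q_{iM}-\sum_{j\in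 S}c_S(q_{RS})q_{ij}-\sum_{j\in M\setminus S}w_j(q_{Rj})q_{ij}$. $\mathbb{Q}^R=\{q\in\mathbb{R}_+^{R\times M}: q_{iM}\le q_i^*,\ q_{ij}\le\overline{q}_{ij}\}$; $q^{(R,S)}$ is an optimal solution of $\max\{\sum_{i\in R}\Pi_i(q_i,\Psi^S(q_R)):q\in\mathbb{Q}^R\}$. The MRS-game is the TU-game on player set $N\cup M$ where coalition $R\cup S$ ($R\subseteq N$, $S\subseteq M$) has value $v(R,S)=\sum_{i\in R}\Pi_i(q_i^{(R,S)},\Psi^S(q_R^{(R,S)}))$ (the optimal value of that problem), and $v(\emptyset,S)=0$ for all $S\subseteq M$. *)

From HB Require Import structures.
From mathcomp Require Import all_boot all_order all_algebra.
From mathcomp Require Import all_classical all_reals all_analysis.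
Set Implicit Arguments. Unset Strict Implicit. Unset Printing Implicit Defensive.
Import Order.TTheory GRing.Theory Num.Theory.
Import numFieldNormedType.Exports.
Local Open Scope classical_set_scope.
Local Open Scope ring_scope.

Section MRS.
Variables (R : realType) (I J : finType).
(* I = retailers N, J = suppliers M *)
Variables (c w : J -> R -> R) (p : I -> R -> R) (qstar : I -> R) (qbar : I -> J -> R).

Definition nonneg_reals : set R := [set x | 0 <= x].

Definition MRS_situation : Prop :=
  (forall j, forall x, 0 <= x -> 0 < c j x) /\
      (forall j, forall x y, 0 <= x -> x < y -> c j y < c j x) /\
      (forall j, {within nonneg_reals, continuous (c j)}) /\
      (forall j, forall x y, 0 <= x -> x <= y -> c j x * x <= c j y * y) /\
      (forall j, forall x, 0 <= x -> 0 < w j x) /\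
      (forall j, forall x y, 0 <= x -> x <= y -> w j y <= w j x) /\
      (forall j, {within nonneg_reals, continuous (w j)}) /\
      (forall j, forall x, 0 <= x -> c j x < w j x) /\
   (forall j, forall x y, 0 <= x -> x <= y -> w j x * x <= w j y * y) /\
       (forall i, forall x y, 0 <= x -> x <= y -> p i y <= p i x) /\
       (forall i, {within nonneg_reals, continuous (p i)}) /\
       (forall i j, w j 0 < p i 0) /\
       (forall i, 0 < qstar i /\ p i (qstar i) = 0) /\
       (forall i j, 0 < qbar i j).

(* order matrices: q i j = quantity ordered by retailer i from supplier j *)
Definition q_Rj (Rc : {set I}) (q : I -> J -> R) (j : J) : R := \sum_(i in Rc) q i j.
Definition q_iM (q : I -> J -> R) (i : I) : R := \sum_j q i j.
Definition q_RS (Rc : {set I}) (S : {set J}) (q : I -> J -> R) : R :=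
  \sum_(j in S) q_Rj Rc q j.

(* c_S(x) = min_{j in S} c_j(x)  (irrelevant, set to 0, when S is empty) *)
Definition c_S (S : {set J}) (x : R) : R :=
  if [pick j in S] is Some j0 then \big[Order.min/c j0 x]_(j in S) c j x else 0.

Definition Pi (Rc : {set I}) (S : {set J}) (q : I -> J -> R) (i : I) : R :=
  p i (q_iM q i) * q_iM q i
  - \sum_(j in S) c_S S (q_RS Rc S q) * q i j
  - \sum_(j in ~: S) w j (q_Rj Rc q j) * q i j.

Definition objective (Rc : {set I}) (S : {set J}) (q : I -> J -> R) : R :=
  \sum_(i in Rc) Pi Rc S q i.

Definition feasible (Rc : {set I}) (q : I -> J -> R) : Prop :=
  (forall i j, i \notin Rc -> q i j = 0) /\
  (forall i, i \in Rc -> q_iM q i <= qstar i /\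
     forall j, 0 <= q i j /\ q i j <= qbar i j).

Definition mrs_value (Rc : {set I}) (S : {set J}) : R :=
  if Rc == finset.set0 then 0
  else sup [set x | exists q, feasible Rc q /\ x = objective Rc S q].

End MRS.

From HB Require Import structures.
From mathcomp Require Import all_boot all_order all_algebra.
From mathcomp Require Import all_classical all_reals all_analysis.
Import Order.TTheory GRing.Theory Num.Theory.
Import numFieldNormedType.Exports.
Set Implicit Arguments. Unset Strict Implicit. Unset Printing Implicit Defensive.
Local Open Scope ring_scope.

(* Each retailer's profit is its revenue minus what it pays per unit,
   and every such unit price only drops when the coalition grows: a supplier
   that joins sells at the least production cost [c_S], which is below its
   wholesale price, and larger aggregate orders lower both [c] and [w].  Hence a
   feasible plan of a coalition stays feasible for a larger one and earns at
   least as much there (monotonicity), and the sum of plans of two coalitions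
   with disjoint retailer sets is feasible for their union, where every retailer
   pays no more than before (superadditivity; the supplier sets need not be
   disjoint).  For positivity, one retailer orders a small quantity [e] from one
   supplier: it pays at most [w_j(0) < p_i(0)] per unit, and [p_i(e)] is still
   above [w_j(0)] by continuity of [p_i] at [0]. *)

Lemma ler_sum_subset (R : numDomainType) (T : finType) (A B : {set T}) (f : T -> R) :
  A \subset B -> {in B, forall i, 0 <= f i} ->
  \sum_(i in A) f i <= \sum_(i in B) f i.
Proof.
move=> AB f0; rewrite [leRHS](big_setID A) /= (finset.setIidPr AB) lerDl.
by apply: sumr_ge0 => i; rewrite inE => /andP[_ /f0].
Qed.

Lemma exists_small_pos_gt (R : realType) (f : R -> R) (a b : R) :
  {within @nonneg_reals R, continuous f}%classic -> a < f 0 -> 0 < b ->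
  exists2 e, 0 < e <= b & a < f e.
Proof.
move=> fc af0 b0.
have : \forall t \near within (@nonneg_reals R) (nbhs (0 : R)), a < f t.
  by rewrite nbhs_subspace_in ?inE; [exact: cvgr_gt (fc 0) _ af0 | rewrite /nonneg_reals /=].
case/nbhs_ballP => d /= d0 near_gt.
pose e := Num.min (d / 2) b.
have e0 : 0 < e by rewrite lt_min divr_gt0.
exists e; first by rewrite e0 ge_min lexx orbT.
apply: near_gt; last by rewrite /nonneg_reals /= ltW.
rewrite /ball /= sub0r normrN gtr0_norm // gt_min; apply/orP; left.
by rewrite ltr_pdivrMr // ltr_pMr // ltr1n.
Qed.

Section MinimalCost.
Variables (R : realType) (J : finType) (c : J -> R -> R).

Lemma c_S_le (S : {set J}) (x : R) (j : J) : j \in S -> c_S c S x <= c j x.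
Proof.
by move=> jS; rewrite /c_S; case: pickP => [j0 _|/(_ j)]; [exact: bigmin_le_cond | rewrite jS].
Qed.

Lemma c_S_ge0 (S : {set J}) (x : R) : (forall j, 0 <= c j x) -> 0 <= c_S c S x.
Proof. by move=> c0; rewrite /c_S; case: pickP => // j0 _; apply/bigmin_geP. Qed.

Hypothesis c_anti : forall j (x y : R), 0 <= x -> x <= y -> c j y <= c j x.

Lemma c_S_anti (S S' : {set J}) (x y : R) :
  S \subset S' -> S != finset.set0 -> 0 <= x -> x <= y -> c_S c S' y <= c_S c S x.
Proof.
move=> SS' /finset.set0Pn[j jS] x0 xy.
have le_c k : k \in S -> c_S c S' y <= c k x.
  by move=> kS; apply: le_trans (c_S_le y (fintype.subsetP SS' k kS)) (c_anti _ x0 xy).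
rewrite {2}/c_S; case: pickP => [j0 j0S|/(_ j)]; last by rewrite jS.
by apply/bigmin_geP; split; [exact: le_c | move=> k; exact: le_c].
Qed.

End MinimalCost.

Section MRSGame.
Variables (R : realType) (I J : finType).
Variables (c w : J -> R -> R) (p : I -> R -> R) (qstar : I -> R) (qbar : I -> J -> R).

Hypothesis c_gt0 : forall j (x : R), 0 <= x -> 0 < c j x.
Hypothesis c_anti : forall j (x y : R), 0 <= x -> x <= y -> c j y <= c j x.
Hypothesis w_gt0 : forall j (x : R), 0 <= x -> 0 < w j x.
Hypothesis w_anti : forall j (x y : R), 0 <= x -> x <= y -> w j y <= w j x.
Hypothesis c_lt_w : forall j (x : R), 0 <= x -> c j x < w j x.

(* The unit price [Psi^S(q_R)] that a retailer of the coalition [R \cup S] pays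
   supplier [j], as a function of the aggregate orders [a = q_R]. *)
Definition unit_cost (S : {set J}) (a : J -> R) (j : J) : R :=
  if j \in S then c_S c S (\sum_(k in S) a k) else w j (a j).

Lemma unit_cost_ge0 (S : {set J}) (a : J -> R) (j : J) :
  (forall k, 0 <= a k) -> 0 <= unit_cost S a j.
Proof.
move=> a0; rewrite /unit_cost; case: ifP => _; last exact/ltW/w_gt0.
by apply: c_S_ge0 => k; apply/ltW/c_gt0/sumr_ge0.
Qed.

Lemma unit_cost_anti (S S' : {set J}) (a a' : J -> R) (j : J) : S \subset S' ->
  (forall k, 0 <= a k) -> (forall k, a k <= a' k) ->
  unit_cost S' a' j <= unit_cost S a j.
Proof.
move=> SS' a0 le_aa'.
have a'0 k : 0 <= a' k by exact: le_trans (a0 k) (le_aa' k).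
rewrite /unit_cost; have [jS|jNS] := boolP (j \in S).
  rewrite (fintype.subsetP SS' j jS); apply: c_S_anti => //.
  - by apply/finset.set0Pn; exists j.
  - exact: sumr_ge0.
  apply: (le_trans (y := \sum_(k in S) a' k)); first exact: ler_sum.
  by apply: ler_sum_subset => // k _; exact: a'0.
have [jS'|_] := boolP (j \in S'); last exact: w_anti.
have le_a'_sum : a j <= \sum_(k in S') a' k.
  by rewrite (bigD1 j) //= (le_trans (le_aa' j)) // lerDl sumr_ge0.
apply: le_trans (c_S_le c _ jS') _.
exact/ltW/(le_lt_trans (c_anti _ (a0 j) le_a'_sum))/c_lt_w.
Qed.

Lemma unit_cost_le_w0 (S : {set J}) (a : J -> R) (j : J) :
  (forall k, 0 <= a k) -> unit_cost S a j <= w j 0.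
Proof.
move=> a0; have := unit_cost_anti j (finset.sub0set S) (fun=> lexx 0) a0.
by rewrite /unit_cost finset.in_set0.
Qed.

Lemma PiE (Rc : {set I}) (S : {set J}) (q : I -> J -> R) (i : I) :
  Pi c w p Rc S q i = p i (q_iM q i) * q_iM q i - \sum_j unit_cost S (q_Rj Rc q) j * q i j.
Proof.
rewrite /Pi -addrA -opprD [in RHS](bigID (mem S)) /=; congr (_ - (_ + _)).
  by apply: eq_bigr => j jS; rewrite /unit_cost jS.
by apply: eq_big => [j|j]; rewrite ?inE // /unit_cost => /negbTE ->.
Qed.

Lemma Pi_row0 (Rc : {set I}) (S : {set J}) (q : I -> J -> R) (i : I) :
  q i =1 (fun=> 0) -> Pi c w p Rc S q i = 0.
Proof.
by move=> qi0; rewrite PiE /q_iM !big1 ?mulr0 ?subrr // => j _; rewrite qi0 ?mulr0.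
Qed.

Lemma Pi_le (Rc Rc' : {set I}) (S S' : {set J}) (q q' : I -> J -> R) (i : I) :
  Rc \subset Rc' -> S \subset S' -> q' i =1 q i -> (forall k j, 0 <= q' k j <= q k j) ->
  Pi c w p Rc S q' i <= Pi c w p Rc' S' q i.
Proof.
move=> RR' SS' qi le_q'q.
have q'0 k j : 0 <= q' k j by case/andP: (le_q'q k j).
have le_agg j : q_Rj Rc q' j <= q_Rj Rc' q j.
  apply: (le_trans (y := q_Rj Rc q j)).
    by apply: ler_sum => k _; case/andP: (le_q'q k j).
  by apply: ler_sum_subset => // k _; case/andP: (le_q'q k j); exact: le_trans.
rewrite !PiE; have -> : q_iM q' i = q_iM q i by apply: eq_bigr => j _; rewrite qi.
rewrite lerB // ler_sum // => j _; rewrite -qi ler_wpM2r //.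
by apply: unit_cost_anti => // k; apply: sumr_ge0.
Qed.

Hypothesis qstar_gt0 : forall i, 0 < qstar i.
Hypothesis qbar_gt0 : forall i j, 0 < qbar i j.

(* [feasible qstar qbar Rc q] says that the rows of [q] outside [Rc] vanish and
   that [row_feasible i (q i)] holds, up to conversion, for every [i] in [Rc]. *)
Definition row_feasible (i : I) (r : J -> R) : Prop :=
  \sum_j r j <= qstar i /\ forall j, 0 <= r j /\ r j <= qbar i j.

Lemma row_feasible0 (i : I) : row_feasible i (fun=> 0).
Proof. by split=> [|j]; [rewrite big1 // ltW | split; last exact/ltW]. Qed.

Lemma eq_row_feasible (i : I) (r r' : J -> R) :
  r =1 r' -> row_feasible i r -> row_feasible i r'.
Proof.
move=> e [sum_le bnd]; split=> [|j]; last by rewrite -e.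
by rewrite -(eq_bigr _ (fun j _ => e j)).
Qed.

Lemma feasible_ge0 (Rc : {set I}) (q : I -> J -> R) :
  feasible qstar qbar Rc q -> forall i j, 0 <= q i j.
Proof.
case=> out feas i j; have [iR|iNR] := boolP (i \in Rc); last by rewrite out.
by have [_ /(_ j) []] := feas i iR.
Qed.

Lemma feasible0 (Rc : {set I}) : feasible qstar qbar Rc (fun _ _ => 0).
Proof. by split=> // i _; exact: row_feasible0. Qed.

Lemma feasible_subset (Rc F : {set I}) (q : I -> J -> R) : Rc \subset F ->
  feasible qstar qbar Rc q -> feasible qstar qbar F q.
Proof.
move=> RF [out feas]; split=> [i j iNF|i iF].
  by apply: out; apply: contra iNF; exact: fintype.subsetP.
have [iR|iNR] := boolP (i \in Rc); first exact: feas.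
by apply: (eq_row_feasible (r := fun=> 0)) (row_feasible0 i) => j; rewrite out.
Qed.

Lemma feasible_add (Rc F : {set I}) (q1 q2 : I -> J -> R) : [disjoint Rc & F] ->
  feasible qstar qbar Rc q1 -> feasible qstar qbar F q2 ->
  feasible qstar qbar (Rc :|: F) (fun i j => q1 i j + q2 i j).
Proof.
move=> dRF [out1 feas1] [out2 feas2]; split=> [i j|i].
  by rewrite finset.in_setU negb_or => /andP[iNR iNF]; rewrite out1 // out2 // addr0.
rewrite finset.in_setU => /orP[iR|iF].
  apply: (eq_row_feasible (r := q1 i)) (feas1 i iR) => j.
  by rewrite out2 ?addr0 ?(disjointFr dRF iR).
apply: (eq_row_feasible (r := q2 i)) (feas2 i iF) => j.
by rewrite out1 ?add0r ?(disjointFl dRF iF).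
Qed.

Hypothesis p_anti : forall i (x y : R), 0 <= x -> x <= y -> p i y <= p i x.

Lemma objective_le_bound (Rc : {set I}) (S : {set J}) (q : I -> J -> R) :
  feasible qstar qbar Rc q ->
  objective c w p Rc S q <= \sum_(i in Rc) `|p i 0| * qstar i.
Proof.
move=> fq; have q0 := feasible_ge0 fq; apply: ler_sum => i iR.
have x0 : 0 <= q_iM q i by apply: sumr_ge0 => j _.
have [x_le _] := fq.2 i iR.
rewrite PiE; apply: (le_trans (y := p i (q_iM q i) * q_iM q i)).
  rewrite gerBl sumr_ge0 // => j _; rewrite mulr_ge0 // unit_cost_ge0 // => k.
  exact: sumr_ge0.
apply: le_trans (ler_wpM2l (normr_ge0 _) x_le).
by rewrite ler_wpM2r // (le_trans (p_anti i (lexx 0) x0)) ?ler_norm.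
Qed.

Lemma mrs_value_ge (Rc : {set I}) (S : {set J}) (q : I -> J -> R) :
  Rc != finset.set0 -> feasible qstar qbar Rc q ->
  objective c w p Rc S q <= mrs_value c w p qstar qbar Rc S.
Proof.
move=> R0 fq; rewrite /mrs_value (negbTE R0); apply: ub_le_sup; last by exists q.
exists (\sum_(i in Rc) `|p i 0| * qstar i) => _ [q' [fq' ->]].
exact: objective_le_bound.
Qed.

Lemma mrs_value_le (Rc : {set I}) (S : {set J}) (b : R) : Rc != finset.set0 ->
  (forall q, feasible qstar qbar Rc q -> objective c w p Rc S q <= b) ->
  mrs_value c w p qstar qbar Rc S <= b.
Proof.
move=> R0 ub; rewrite /mrs_value (negbTE R0); apply: ge_sup.
  exists (objective c w p Rc S (fun _ _ => 0)), (fun _ _ => 0).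
  by split; first exact: feasible0.
by move=> _ [q [fq ->]]; exact: ub.
Qed.

Lemma objective_subset (Rc F : {set I}) (S T : {set J}) (q : I -> J -> R) :
  Rc \subset F -> S \subset T -> feasible qstar qbar Rc q ->
  objective c w p Rc S q <= objective c w p F T q.
Proof.
move=> RF ST fq; have q0 := feasible_ge0 fq.
rewrite /objective [leRHS](big_setID Rc) /= (finset.setIidPr RF).
rewrite [X in _ <= _ + X]big1 ?addr0 => [|i]; last first.
  by rewrite finset.in_setD => /andP[iNR _]; apply: Pi_row0 => j; rewrite fq.1.
by apply: ler_sum => i _; apply: Pi_le => // k j; rewrite q0 lexx.
Qed.

Lemma objective_add (Rc F : {set I}) (S T : {set J}) (q1 q2 : I -> J -> R) :
  [disjoint Rc & F] -> feasible qstar qbar Rc q1 -> feasible qstar qbar F q2 ->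
  objective c w p Rc S q1 + objective c w p F T q2 <=
  objective c w p (Rc :|: F) (S :|: T) (fun i j => q1 i j + q2 i j).
Proof.
move=> dRF f1 f2; have q10 := feasible_ge0 f1; have q20 := feasible_ge0 f2.
rewrite /objective [leRHS](eq_bigl [predU Rc & F]) => [|i]; last by rewrite !inE.
rewrite bigU //; apply: lerD; apply: ler_sum => i iX; apply: Pi_le.
- exact: finset.subsetUl.
- exact: finset.subsetUl.
- by move=> j; rewrite f2.1 ?addr0 ?(disjointFr dRF iX).
- by move=> k j; rewrite q10 lerDl q20.
- exact: finset.subsetUr.
- exact: finset.subsetUr.
- by move=> j; rewrite f1.1 ?add0r ?(disjointFl dRF iX).
- by move=> k j; rewrite q20 lerDr q10.
Qed.

Lemma objective0 (Rc : {set I}) (S : {set J}) :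
  objective c w p Rc S (fun _ _ => 0) = 0.
Proof. by rewrite /objective big1 // => i _; exact: Pi_row0. Qed.

Lemma mrs_value_ge0 (Rc : {set I}) (S : {set J}) :
  0 <= mrs_value c w p qstar qbar Rc S.
Proof.
have [->|R0] := eqVneq Rc finset.set0; first by rewrite /mrs_value eqxx.
by rewrite -(objective0 Rc S); apply: mrs_value_ge => //; exact: feasible0.
Qed.

Lemma mrs_value_subset (Rc F : {set I}) (S T : {set J}) :
  Rc \subset F -> S \subset T ->
  mrs_value c w p qstar qbar Rc S <= mrs_value c w p qstar qbar F T.
Proof.
move=> RF ST; have [->|R0] := eqVneq Rc finset.set0.
  by rewrite {1}/mrs_value eqxx mrs_value_ge0.
have F0 : F != finset.set0.
  by apply: contraNneq R0 => F0; rewrite -finset.subset0 -F0.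
apply: mrs_value_le => // q fq.
exact: le_trans (objective_subset RF ST fq) (mrs_value_ge T F0 (feasible_subset RF fq)).
Qed.

Lemma mrs_value_superadditive (Rc F : {set I}) (S T : {set J}) :
  [disjoint Rc & F] ->
  mrs_value c w p qstar qbar Rc S + mrs_value c w p qstar qbar F T <=
  mrs_value c w p qstar qbar (Rc :|: F) (S :|: T).
Proof.
move=> dRF; have [->|R0] := eqVneq Rc finset.set0.
  rewrite {1}/mrs_value eqxx add0r finset.set0U.
  by apply: mrs_value_subset => //; exact: finset.subsetUr.
have [->|F0] := eqVneq F finset.set0.
  rewrite {2}/mrs_value eqxx addr0 finset.setU0.
  by apply: mrs_value_subset => //; exact: finset.subsetUl.
have RF0 : Rc :|: F != finset.set0 by rewrite finset.setU_eq0 negb_and R0.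
rewrite -lerBrDr; apply: mrs_value_le => // q1 f1.
rewrite lerBrDl -lerBrDr; apply: mrs_value_le => // q2 f2.
rewrite lerBrDl; apply: le_trans (objective_add S T dRF f1 f2) _.
exact: mrs_value_ge RF0 (feasible_add dRF f1 f2).
Qed.

Hypothesis p_cont : forall i, {within @nonneg_reals R, continuous (p i)}%classic.
Hypothesis w0_lt_p0 : forall i j, w j 0 < p i 0.

Lemma exists_objective_gt0 (Rc : {set I}) (S : {set J}) (j0 : J) :
  Rc != finset.set0 ->
  exists2 q, feasible qstar qbar Rc q & 0 < objective c w p Rc S q.
Proof.
case/finset.set0Pn => i0 i0R.
have b0 : 0 < Num.min (qstar i0) (qbar i0 j0) by rewrite lt_min qstar_gt0 qbar_gt0.
have [e /andP[e0]] := exists_small_pos_gt (@p_cont i0) (w0_lt_p0 i0 j0) b0.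
rewrite le_min => /andP[e_qstar e_qbar] p_gt.
pose q i j := if (i == i0) && (j == j0) then e else 0.
have q0 i j : 0 <= q i j by rewrite /q; case: ifP => // _; exact: ltW.
have q_row0 i : i != i0 -> q i =1 (fun=> 0) by move=> /negbTE ne j; rewrite /q ne.
have q_i0j0 : q i0 j0 = e by rewrite /q !eqxx.
have q_i0 : q_iM q i0 = e.
  rewrite /q_iM (bigD1 j0) //= big1 ?q_i0j0 ?addr0 // => j /negbTE ne.
  by rewrite /q ne andbF.
exists q.
  split=> [i j iNR|i iR]; first by apply: q_row0; apply: contraNneq iNR => ->.
  have [->|ne] := eqVneq i i0; last first.
    by apply: (eq_row_feasible (r := fun=> 0)) (row_feasible0 i) => j; rewrite q_row0.
  split=> [|j]; first by rewrite q_i0.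
  split=> //; rewrite /q; case: ifP => [/andP[_ /eqP ->] // | _]; exact/ltW.
rewrite /objective (bigD1 i0) //= big1 => [|i /andP[_ ne]]; last first.
  exact: Pi_row0 (q_row0 i ne).
rewrite addr0 PiE q_i0 (bigD1 j0) //= big1 => [|j /negbTE ne]; last first.
  by rewrite /q ne andbF mulr0.
rewrite addr0 q_i0j0 -mulrBl mulr_gt0 // subr_gt0 (le_lt_trans _ p_gt) //.
by apply: unit_cost_le_w0 => k; apply: sumr_ge0.
Qed.

Lemma mrs_value_gt0 (Rc : {set I}) (S : {set J}) (j0 : J) :
  Rc != finset.set0 ->
  0 < mrs_value c w p qstar qbar Rc S.
Proof.
move=> R0; have [q fq obj_gt0] := exists_objective_gt0 S j0 R0.
exact: lt_le_trans obj_gt0 (mrs_value_ge S R0 fq).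
Qed.

End MRSGame.

Theorem proposition1 (R : realType) (I J : finType)
  (c w : J -> R -> R) (p : I -> R -> R) (qstar : I -> R) (qbar : I -> J -> R) :
  (0 < #|J|)%N ->
  MRS_situation c w p qstar qbar ->
  let v := mrs_value c w p qstar qbar in
  [/\ (forall (Rc : {set I}) (S : {set J}), Rc != finset.set0 -> 0 < v Rc S),
      (forall (Rc F : {set I}) (S T : {set J}),
          Rc :&: F = finset.set0 -> S :&: T = finset.set0 ->
          v Rc S + v F T <= v (Rc :|: F) (S :|: T)) &
      (forall (Rc F : {set I}) (S T : {set J}),
          Rc \subset F -> S \subset T -> v Rc S <= v F T)].
Proof.
move=> /card_gt0P[j0 _] [c_gt0 [c_dec [_ [_ [w_gt0 [w_anti [_ [c_lt_w [_
  [p_anti [p_cont [w0_lt_p0 [qstar_spec qbar_gt0]]]]]]]]]]]]] v.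
have c_anti j (x y : R) : 0 <= x -> x <= y -> c j y <= c j x.
  by move=> x0; rewrite le_eqVlt => /predU1P[->|/(c_dec j _ _ x0)/ltW].
have qstar_gt0 i : 0 < qstar i by have [] := qstar_spec i.
split=> [Rc S R0|Rc F S T /eqP dRF _|Rc F S T RF ST].
- exact: mrs_value_gt0 j0 R0.
- by apply: mrs_value_superadditive => //; rewrite -finset.setI_eq0 dRF.
- exact: mrs_value_subset.
Qed.
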